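(* Let $C$ be a program, let $F=\{f_1\preceq f_2\preceq\cdots\}$ be an $\omega$-chain in $\mathbb{T}$, let $f,g\in\mathbb{T}$, and let $u\in\mathbb{T}$ be a constant runtime. Then: (1) ($\omega$-continuity) $\mathsf{ert}[\![C]\!](\sup F)=\sup\{\mathsf{ert}[\![C]\!](f')\mid f'\in F\}$; (2) (monotonicity) $f\preceq g$ implies $\mathsf{ert}[\![C]\!](f)\preceq\mathsf{ert}[\![C]\!](g)$; (3) (sub-additivity) $\mathsf{ert}[\![C]\!](f+g)\preceq\mathsf{ert}[\![C]\!](f)+\mathsf{ert}[\![C]\!](g)$; (4) (constant propagation) $\mathsf{ert}[\![C]\!](u+f)\preceq u+\mathsf{ert}[\![C]\!](f)$.
   Context: States and programs. Fix a finite set $\mathrm{Vars}$ of variables; values are $\mathbb{N}$, locations are $\mathbb{N}_{>0}$. A stack is $s\colon \mathrm{Vars}\to\mathbb{N}$; a heap is a partial map $h$ from a finite set $\mathrm{dom}(h)\subseteq\mathbb{N}_{>0}$ to $\mathbb{N}$. $h_1\perp h_2$ means disjoint domains; then $h_1\star h_2$ is their union; $h_\emptyset$ is the empty heap. $\mathsf{States}$ is the set of pairs $(s,h)$. $s(e)$ is the value of a (heap-independent) arithmetic expression $e$ under $s$, $s\models\varphi$ means the Boolean expression $\varphi$ holds under $s$, $s[x\mapsto v]$ is the updated stack. Programs are generated by $C ::= \mathtt{tick}(e) \mid x:=e \mid x:=\mathtt{alloc}(e) \mid \langle e\rangle:=e' \mid x:=\langle e\rangle \mid \mathtt{free}(e)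 \mid \{C\}[p]\{C\} \mid \mathtt{if}(\varphi)\{C\}\mathtt{else}\{C\} \mid C;C \mid \mathtt{while}(\varphi)\{C\}$, where $p$ is an expression with $s(p)\in[0,1]\cap\mathbb{Q}$ for all $s$. Runtimes. $\mathbb{T}$ is the set of functions $\mathsf{States}\to[0,\infty]$, ordered pointwise by $\preceq$ (suprema pointwise); arithmetic is pointwise with $0\cdot\infty=0$. $[\varphi]$ is the $0/1$-valued Iverson bracket. Truncated subtraction: $a\dot- b=\max(a-b,0)$, $\infty\dot- b=\infty$ for finite $b$, $a\dot-\infty=0$. $(f\oplus g)(s,h)=\min\{f(s,h_1)+g(s,h_2)\mid h=h_1\star h_2\}$; $(f \mathbin{-\!\!\ominus} g)(s,h)=\sup\{g(s,h\star h')\dot- f(s,h')\mid h'\perp h\}$; $(\inf y\colon f)(s,h)=\inf_{v\in\mathbb{N}} f(s[y\mapsto v],h)$, $(\sup y\colon f)(s,h)=\sup_{v\in\mathbb{N}}f(s[y\mapsto v],h)$; $f[x/e](s,h)=f(s[x\mapsto s(e)],h)$. $\mathsf{tm}(e)(s,h)=s(e)$ if $h=h_\emptyset$, else $\infty$; $[e\mapsto e'](s,h)=0$ if $\mathrm{dom}(h)=\{s(e)\}$ and $h(s(e))=s(e')$, else $\infty$; $[e\mapsto -](s,h)=0$ if $\mathrm{dom}(h)=\{s(e)\}$, else $\infty$; $\bigoplus_{i=1}^{e} f_i$ is the separating sum over $i=1,\dots,s(e)$ (empty one: $[\mathsf{emp}]$, which is $0$ if $h=h_\emptyset$, else $\infty$).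 Expected runtime transformer $\mathsf{ert}[\![C]\!]\colon\mathbb{T}\to\mathbb{T}$ (with $v$ fresh): $\mathsf{ert}[\![\mathtt{tick}(e)]\!](f)=\mathsf{tm}(e)\oplus f$; $\mathsf{ert}[\![x:=e]\!](f)=f[x/e]$; $\mathsf{ert}[\![x:=\mathtt{alloc}(e)]\!](f)=\sup v\colon (\bigoplus_{i=1}^{e}[v+i-1\mapsto 0])\mathbin{-\!\!\ominus} f[x/v]$; $\mathsf{ert}[\![\langle e\rangle:=e']\!](f)=[e\mapsto-]\oplus([e\mapsto e']\mathbin{-\!\!\ominus} f)$; $\mathsf{ert}[\![x:=\langle e\rangle]\!](f)=\inf v\colon [e\mapsto v]\oplus([e\mapsto v]\mathbin{-\!\!\ominus} f[x/v])$; $\mathsf{ert}[\![\mathtt{free}(e)]\!](f)=[e\mapsto-]\oplus f$; $\mathsf{ert}[\![C_1;C_2]\!](f)=\mathsf{ert}[\![C_1]\!](\mathsf{ert}[\![C_2]\!](f))$; conditional: $[\varphi]\cdot\mathsf{ert}[\![C_1]\!](f)+[\neg\varphi]\cdot\mathsf{ert}[\![C_2]\!](f)$; probabilistic choice: $p\cdot\mathsf{ert}[\![C_1]\!](f)+(1-p)\cdot\mathsf{ert}[\![C_2]\!](f)$; $\mathsf{ert}[\![\mathtt{while}(\varphi)\{C\}]\!](f)=\mathrm{lfp}\, g.\ [\neg\varphi]\cdot f+[\varphi]\cdot\mathsf{ert}[\![C]\!](g)$ (least fixed point in $(\mathbb{T},\preceq)$). *)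

(* runtimes are functions into the extended reals
   \bar R over an arbitrary realType R, restricted to nonnegative values. *)
From HB Require Import structures.
From mathcomp Require Import all_boot all_order all_algebra.
From mathcomp Require Import all_classical all_reals all_analysis.
Set Implicit Arguments. Unset Strict Implicit. Unset Printing Implicit Defensive.
Import Order.TTheory GRing.Theory Num.Theory.
Local Open Scope classical_set_scope.
Local Open Scope ereal_scope.

Section ERT.
Variable R : realType.
Variable Vars : finType.

Definition stack := Vars -> nat.
Definition upd (s : stack) (x : Vars) (v : nat) : stack :=
  fun y => if y == x then v else s y.

Record heap := Heap {
  hfun : nat -> option nat;
  hfin : exists n, forall l, (n <= l)%N -> hfun l = None;
  hpos : hfun 0%N = None }.

Definition disj (h1 h2 : heap) := forall l, hfun h1 l = None \/ hfun h2 l = None.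
Definition is_union (h h1 h2 : heap) :=
  forall l, hfun h l = match hfun h1 l with Some v => Some v | None => hfun h2 l end.
Definition is_emp (h : heap) := forall l, hfun h l = None.

Definition state := (stack * heap)%type.
Definition runtime := state -> \bar R.

Definition aexp := stack -> nat.
Definition bexp := stack -> bool.
Definition pexp := stack -> rat.

Inductive prog :=
| Tick of aexp
| Assign of Vars & aexp
| Alloc of Vars & aexp
| Store of aexp & aexp
| Lookup of Vars & aexp
| Free of aexp
| PChoice of prog & pexp & prog
| Ite of bexp & prog & prog
| Seq of prog & prog
| While of bexp & prog.

Fixpoint prog_wf (C : prog) : Prop :=
  match C with
  | PChoice C1 p C2 => (forall s, (0 <= p s <= 1)%R) /\ prog_wf C1 /\ prog_wf C2
  | Ite _ C1 C2 | Seq C1 C2 => prog_wf C1 /\ prog_wf C2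
  | While _ C1 => prog_wf C1
  | _ => True
  end.

Definition nonneg (f : runtime) := forall st, 0 <= f st.
Definition rle (f g : runtime) := forall st, f st <= g st.
Definition radd (f g : runtime) : runtime := fun st => f st + g st.
Definition supT (F : nat -> runtime) : runtime :=
  fun st => ereal_sup (range (fun n => F n st)).

Definition iverson (b : bool) : \bar R := if b then 1 else 0.

Definition tsub (a b : \bar R) : \bar R :=
  if b == +oo then 0 else Order.max (a - b) 0.

Definition sepadd (f g : runtime) : runtime := fun st =>
  ereal_inf [set r | exists h1 h2, disj h1 h2 /\ is_union st.2 h1 h2 /\
                                   r = f (st.1, h1) + g (st.1, h2)].

Definition wand (f g : runtime) : runtime := fun st =>
  ereal_sup [set r | exists h' hu, disj st.2 h' /\ is_union hu st.2 h' /\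
                                   r = tsub (g (st.1, hu)) (f (st.1, h'))].

Definition inf_nat (f : nat -> runtime) : runtime := fun st =>
  ereal_inf [set f v st | v in [set: nat]].
Definition sup_nat (f : nat -> runtime) : runtime := fun st =>
  ereal_sup [set f v st | v in [set: nat]].

Definition subst (f : runtime) (x : Vars) (e : aexp) : runtime :=
  fun st => f (upd st.1 x (e st.1), st.2).

Definition tm (e : aexp) : runtime := fun st =>
  if `[< is_emp st.2 >] then ((e st.1)%:R)%:E else +oo.

Definition pointsto (e e' : aexp) : runtime := fun st =>
  if `[< forall l, hfun st.2 l = if l == e st.1 then Some (e' st.1) else None >]
  then 0 else +oo.

Definition pointsto_any (e : aexp) : runtime := fun st =>
  if `[< (forall l, l <> e st.1 -> hfun st.2 l = None) /\ hfun st.2 (e st.1) <> None >]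
  then 0 else +oo.

Definition emp : runtime := fun st => if `[< is_emp st.2 >] then 0 else +oo.

(* separating sum over i = 1 .. n *)
Fixpoint sepsum (n : nat) (F : nat -> runtime) : runtime :=
  match n with
  | 0%N => emp
  | n'.+1 => sepadd (sepsum n' F) (F n'.+1)
  end.
Definition bigsep (e : aexp) (F : nat -> runtime) : runtime :=
  fun st => sepsum (e st.1) F st.

(* least fixed point in the complete lattice of nonnegative runtimes:
   meet of all prefixed points (Knaster-Tarski) *)
Definition lfp (Phi : runtime -> runtime) : runtime := fun st =>
  ereal_inf [set g st | g in [set g | nonneg g /\ rle (Phi g) g]].

Fixpoint ert (C : prog) (f : runtime) : runtime :=
  match C with
  | Tick e => sepadd (tm e) f
  | Assign x e => subst f x e
  | Alloc x e => sup_nat (fun v =>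
      wand (bigsep e (fun i => pointsto (fun _ => (v + i - 1)%N) (fun _ => 0%N)))
           (subst f x (fun _ => v)))
  | Store e e' => sepadd (pointsto_any e) (wand (pointsto e e') f)
  | Lookup x e => inf_nat (fun v =>
      sepadd (pointsto e (fun _ => v))
             (wand (pointsto e (fun _ => v)) (subst f x (fun _ => v))))
  | Free e => sepadd (pointsto_any e) f
  | PChoice C1 p C2 => fun st =>
      ((ratr (p st.1))%:E * ert C1 f st) + ((1 - ratr (p st.1))%:E * ert C2 f st)
  | Ite phi C1 C2 => fun st =>
      iverson (phi st.1) * ert C1 f st + iverson (~~ phi st.1) * ert C2 f st
  | Seq C1 C2 => ert C1 (ert C2 f)
  | While phi C1 => lfp (fun g st =>
      iverson (~~ phi st.1) * f st + iverson (phi st.1) * ert C1 g st)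
  end.

End ERT.

From mathcomp Require Import all_boot all_order all_algebra.
From mathcomp Require Import all_classical all_reals all_analysis.
Import Order.TTheory GRing.Theory Num.Theory.
Set Implicit Arguments. Unset Strict Implicit. Unset Printing Implicit Defensive.
Local Open Scope classical_set_scope.
Local Open Scope ereal_scope.

(** All four properties are proved at once, by induction on [C], for the
   class of _healthy_ transformers: on nonnegative runtimes they preserve
   nonnegativity and are monotone, omega-continuous, subadditive and propagate
   constants.  This class contains shifts by nonnegative constants and
   relocations of the state, and is closed under composition, pointwise
   selection, countable suprema and convex combinations.  Separating addition
   with a precise left operand is a pointwise selection of shift-and-relocate
   maps, since at most one splitting of the heap makes the left operand
   finite; the magic wand with a {0, +oo}-valued left operand is the supremum
   of the post-runtime over the heap extensions it admits.  For loops,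
   omega-continuity gives Kleene's description of the least fixed point as the
   supremum of the iterates, so continuity follows by exchanging two suprema,
   while subadditivity and constant propagation follow by Park induction:
   [lfp f + lfp g] is a prefixed point of the loop functional of [f + g]. *)

Section SequenceSup.
Context {R : realType}.
Implicit Types (u v : nat -> \bar R) (c : \bar R).

Definition esup u := ereal_sup (range u).

Lemma eq_esup u v : u =1 v -> esup u = esup v.
Proof. by move=> /funext ->. Qed.

Lemma esup_ub u n : u n <= esup u.
Proof. by apply: ereal_sup_ubound; exists n. Qed.

Lemma ge_esup u c : (forall n, u n <= c) -> esup u <= c.
Proof. by move=> uc; apply: ge_ereal_sup => _ [n _ <-]. Qed.

Lemma le_esup u v : (forall n, u n <= v n) -> esup u <= esup v.
Proof. by move=> uv; apply: ge_esup => n; apply: le_trans (uv n) (esup_ub v n). Qed.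

Lemma esup_cst c : esup (fun _ => c) = c.
Proof. by apply/eqP; rewrite eq_le ge_esup //= (esup_ub (fun _ => c) 0). Qed.

Lemma esup_ge0 u : (forall n, 0 <= u n) -> 0 <= esup u.
Proof. by move=> u0; apply: le_trans (u0 0%N) (esup_ub u 0). Qed.

Lemma esup_swap (a : nat -> nat -> \bar R) :
  esup (fun k => esup (a k)) = esup (fun n => esup (a^~ n)).
Proof.
apply/eqP; rewrite eq_le; apply/andP; split; apply: ge_esup => k; apply: ge_esup => n.
- exact: le_trans (esup_ub (a^~ n) k) (esup_ub (fun n => esup (a^~ n)) n).
- exact: le_trans (esup_ub (a n) k) (esup_ub (fun k => esup (a k)) n).
Qed.

Lemma esupD u v : nondecreasing_seq u -> nondecreasing_seq v ->
  (forall n, 0 <= u n) -> (forall n, 0 <= v n) ->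
  esup (fun n => u n + v n) = esup u + esup v.
Proof.
move=> nd_u nd_v u0 v0.
have nd_uv : nondecreasing_seq (fun n => u n + v n).
  by move=> m n mn; apply: leeD; [exact: nd_u | exact: nd_v].
apply: (cvg_unique _ (ereal_nondecreasing_cvgn nd_uv)) => //=.
apply: cvgeD; last 2 first.
- exact: ereal_nondecreasing_cvgn.
- exact: ereal_nondecreasing_cvgn.
by apply: ge0_adde_def; rewrite inE; apply: esup_ge0.
Qed.

Lemma esupDl c u : 0 <= c -> nondecreasing_seq u -> (forall n, 0 <= u n) ->
  esup (fun n => c + u n) = c + esup u.
Proof. by move=> c0 nd_u u0; rewrite (@esupD (fun _ => c)) ?esup_cst. Qed.

Lemma esupZl (r : R) u : (0 <= r)%R -> esup (fun n => r%:E * u n) = r%:E * esup u.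
Proof.
move=> r0; rewrite /esup -ereal_supZl //; last by apply/set0P; exists (u 0%N), 0%N.
by rewrite -image_comp.
Qed.

Lemma esup_succ u : nondecreasing_seq u -> esup (fun n => u n.+1) = esup u.
Proof.
move=> nd_u; apply/eqP; rewrite eq_le; apply/andP; split; apply: ge_esup => n.
- exact: esup_ub.
- exact: le_trans (nd_u _ _ (leqnSn n)) (esup_ub _ n).
Qed.

End SequenceSup.

Lemma heap_ext (h h' : heap) : hfun h =1 hfun h' -> h = h'.
Proof.
case: h h' => f1 fin1 pos1 [f2 fin2 pos2] /= /funext E; subst f2.
by congr Heap; apply: Prop_irrelevance.
Qed.

Definition heap0 : heap.
Proof. by refine (@Heap (fun _ => None) _ _) => //; exists 0%N. Defined.

Definition heap_split (h h1 h2 : heap) := disj h1 h2 /\ is_union h h1 h2.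

Lemma heap_split0 h : heap_split h h heap0.
Proof. by split=> l; [right | rewrite /=; case: (hfun h l)]. Qed.

Lemma heap_split_r h h1 h2 l : heap_split h h1 h2 ->
  hfun h2 l = if hfun h1 l is Some _ then None else hfun h l.
Proof. by move=> [D U]; rewrite U; case: (D l) => ->; case: (hfun h1 l). Qed.

Section Healthiness.
Variables (R : realType) (Vars : finType).
Local Notation runtime := (runtime R Vars).
Local Notation state := (state Vars).
Implicit Types (f g : runtime) (F : nat -> runtime) (T : runtime -> runtime).

Definition chain F := (forall n, nonneg (F n)) /\ (forall n, rle (F n) (F n.+1)).

Record healthy T : Prop := Healthy {
  healthy_ge0 : forall f, nonneg f -> nonneg (T f);
  healthy_mono : forall f g, nonneg f -> nonneg g -> rle f g -> rle (T f) (T g);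
  healthy_cont : forall F, chain F -> forall st,
    T (supT F) st = esup (fun n => T (F n) st);
  healthy_subadd : forall f g, nonneg f -> nonneg g ->
    rle (T (radd f g)) (radd (T f) (T g));
  healthy_cst : forall u f, 0 <= u -> nonneg f ->
    rle (T (radd (fun _ => u) f)) (radd (fun _ => u) (T f)) }.

Lemma chain_nondecreasing F st : chain F -> nondecreasing_seq (F^~ st).
Proof.
move=> [_ FS]; apply: (homo_leq (r := fun x y : \bar R => x <= y)) => //.
- by move=> y x z; apply: le_trans.
- by move=> n; apply: FS.
Qed.

Lemma supT_ge0 F : chain F -> nonneg (supT F).
Proof. by move=> [F0 _] st; apply: esup_ge0 => n; apply: F0. Qed.

Lemma supT_ub F n : rle (F n) (supT F).
Proof. by move=> st; apply: (esup_ub (F^~ st)). Qed.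

Lemma radd_ge0 f g : nonneg f -> nonneg g -> nonneg (radd f g).
Proof. by move=> f0 g0 st; apply: adde_ge0. Qed.

Lemma healthy_chain T F : healthy T -> chain F -> chain (fun n => T (F n)).
Proof.
move=> hT [F0 FS]; split=> n; first exact: healthy_ge0.
by apply: healthy_mono => //; apply: FS.
Qed.

Lemma healthy_supT T F : healthy T -> chain F -> T (supT F) = supT (fun n => T (F n)).
Proof. by move=> hT cF; apply: funext => st; rewrite healthy_cont. Qed.

Lemma healthy_comp T1 T2 : healthy T1 -> healthy T2 -> healthy (fun f => T1 (T2 f)).
Proof.
move=> h1 h2; split.
- by move=> f f0; apply: (healthy_ge0 h1); apply: (healthy_ge0 h2).
- move=> f g f0 g0 fg; apply: (healthy_mono h1) (healthy_mono h2 _ _ fg) => //;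
    exact: healthy_ge0.
- by move=> F cF st; rewrite (healthy_supT h2 cF) healthy_cont //; apply: healthy_chain.
- move=> f g f0 g0 st.
  have [Tf0 Tg0] := (healthy_ge0 h2 f0, healthy_ge0 h2 g0).
  apply: le_trans (healthy_subadd h1 Tf0 Tg0 st).
  apply: (healthy_mono h1); [|exact: radd_ge0|exact: healthy_subadd].
  exact: (healthy_ge0 h2 (radd_ge0 f0 g0)).
- move=> u f u0 f0 st; have Tf0 := healthy_ge0 h2 f0.
  apply: le_trans (healthy_cst h1 u0 Tf0 st).
  apply: (healthy_mono h1); [|exact: radd_ge0|exact: healthy_cst].
  exact: (healthy_ge0 h2 (radd_ge0 _ f0)).
Qed.

Lemma healthy_pointwise (I : Type) (S : I -> runtime -> runtime) T (sel : state -> I) :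
  (forall i, healthy (S i)) -> (forall f, nonneg f -> forall st, T f st = S (sel st) f st) ->
  healthy T.
Proof.
move=> hS TE; split.
- by move=> f f0 st; rewrite TE //; apply: (healthy_ge0 (hS _)).
- by move=> f g f0 g0 fg st; rewrite !TE //; apply: (healthy_mono (hS _)).
- move=> F cF st; rewrite TE ?(healthy_cont (hS (sel st))) //; last exact: supT_ge0.
  by apply: eq_esup => n; rewrite TE //; apply: cF.1.
- move=> f g f0 g0 st; rewrite TE; last exact: radd_ge0.
  rewrite /radd !TE //.
  exact: (healthy_subadd (hS (sel st))).
- move=> u f u0 f0 st; rewrite TE; last exact: radd_ge0.
  rewrite /radd !TE //.
  exact: (healthy_cst (hS (sel st))).
Qed.

Lemma healthy_const f : nonneg f -> healthy (fun _ => f).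
Proof.
move=> f0; split=> //.
- by move=> g h _ _ _.
- by move=> F _ st; rewrite esup_cst.
- by move=> g h _ _ st; apply: leeDr.
- by move=> u g u0 _ st; apply: leeDr.
Qed.

Lemma healthy_relocate (r : state -> state) : healthy (fun f st => f (r st)).
Proof.
split.
- by move=> f f0 st; apply: f0.
- by move=> f g _ _ fg st; apply: fg.
- by move=> F _ st.
- by move=> f g _ _ st.
- by move=> u f _ _ st.
Qed.

Lemma healthy_shift (c : \bar R) : 0 <= c -> healthy (fun f st => c + f st).
Proof.
move=> c0; split.
- by move=> f f0 st; apply: adde_ge0.
- by move=> f g _ _ fg st; apply: leeD2l.
- by move=> F cF st; rewrite esupDl //; [exact: chain_nondecreasing | move=> n; apply: cF.1].
- by move=> f g _ _ st; rewrite /radd addeACA leeD2r // leeDl.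
- by move=> u f _ _ st; rewrite /radd addeCA.
Qed.

Lemma healthy_sup_nat (S : nat -> runtime -> runtime) :
  (forall v, healthy (S v)) -> healthy (fun f => sup_nat (fun v => S v f)).
Proof.
move=> hS; split.
- move=> f f0 st.
  by apply: (@esup_ge0 _ (fun v => S v f st)) => v; apply: (healthy_ge0 (hS v)).
- move=> f g f0 g0 fg st.
  by apply: (@le_esup _ (fun v => S v f st)) => v; apply: (healthy_mono (hS v)).
- move=> F cF st; rewrite -[RHS]/(esup (fun n => esup (fun v => S v (F n) st))).
  by rewrite -esup_swap; apply: eq_esup => v; apply: (healthy_cont (hS v)).
- move=> f g f0 g0 st; apply: (@ge_esup _ (fun v => S v (radd f g) st)) => v.
  apply: le_trans (healthy_subadd (hS v) f0 g0 st) _.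
  by apply: leeD; apply: (esup_ub (fun v => S v _ st)).
- move=> u f u0 f0 st; apply: (@ge_esup _ (fun v => S v (radd (fun _ => u) f) st)) => v.
  apply: le_trans (healthy_cst (hS v) u0 f0 st) _.
  by apply: leeD2l; apply: (esup_ub (fun v => S v f st)).
Qed.

Definition precise (a : runtime) := forall s h h1 h2 h1' h2',
  heap_split h h1 h2 -> heap_split h h1' h2' ->
  a (s, h1) != +oo -> a (s, h1') != +oo -> h1 = h1' /\ h2 = h2'.

Lemma preciseP (a : runtime) (D : stack Vars -> heap -> nat -> option nat) :
  (forall s h h1 h2, heap_split h h1 h2 -> a (s, h1) != +oo -> hfun h1 =1 D s h) ->
  precise a.
Proof.
move=> aD s h h1 h2 h1' h2' S S' a1 a1'.
have E1 : h1 = h1' by apply: heap_ext => l; rewrite (aD _ _ _ _ S a1) (aD _ _ _ _ S' a1').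
subst h1'; by split=> //; apply: heap_ext => l; rewrite (heap_split_r l S) (heap_split_r l S').
Qed.

Definition zero_or_infty (b : runtime) := forall st, b st = 0 \/ b st = +oo.

Lemma zero_or_infty_ge0 b : zero_or_infty b -> nonneg b.
Proof. by move=> bE st; case: (bE st) => ->; rewrite ?leey. Qed.

Lemma sepadd_ge0 a f : nonneg a -> nonneg f -> nonneg (sepadd a f).
Proof.
move=> a0 f0 st; apply: le_ereal_inf_tmp => _ [h1 [h2 [_ [_ ->]]]].
exact: adde_ge0.
Qed.

Lemma sepadd_lb a f s h h1 h2 : heap_split h h1 h2 ->
  sepadd a f (s, h) <= a (s, h1) + f (s, h2).
Proof. by move=> [D U]; apply: ereal_inf_lbound; exists h1, h2. Qed.

Lemma sepadd_infty a f st : nonneg f ->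
  (forall h1 h2, heap_split st.2 h1 h2 -> a (st.1, h1) = +oo) -> sepadd a f st = +oo.
Proof.
move=> f0 a_oo; apply/eqP; rewrite eq_le leey /=.
apply: le_ereal_inf_tmp => _ [h1 [h2 [D [U ->]]]].
by rewrite (a_oo h1 h2) ?addye ?gt_eqF ?(lt_le_trans _ (f0 _)).
Qed.

(* A precise [a] charges at most one sub-heap finitely, so [sepadd a] is a
   shift by a constant followed by a relocation to the remaining heap; the
   constant is [+oo] when no sub-heap is charged finitely. *)
Lemma sepadd_precise a st : precise a -> nonneg a ->
  exists c h2, 0 <= c /\ forall f, nonneg f -> sepadd a f st = c + f (st.1, h2).
Proof.
case: st => s h /= a_prec a0.
have [[h1 [h2 [S a1]]]|no_split] :=
  pselect (exists h1 h2, heap_split h h1 h2 /\ a (s, h1) != +oo).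
  exists (a (s, h1)), h2; split=> // f f0; apply/eqP; rewrite eq_le sepadd_lb //=.
  apply: le_ereal_inf_tmp => _ [h1' [h2' [D' [U' ->]]]].
  have [a1'|a1'] := eqVneq (a (s, h1')) +oo.
    by rewrite a1' addye ?leey // gt_eqF // (lt_le_trans _ (f0 _)).
  by have [-> ->] := a_prec _ _ _ _ _ _ (conj D' U') S a1' a1.
exists +oo, h; split=> // f f0; rewrite addye ?gt_eqF ?(lt_le_trans _ (f0 _)) //.
apply: sepadd_infty => // h1 h2 S; apply/eqP/negPn/negP => a1.
by apply: no_split; exists h1, h2.
Qed.

Lemma sepadd_zero_or_infty a f :
  zero_or_infty a -> zero_or_infty f -> zero_or_infty (sepadd a f).
Proof.
move=> aE fE [s h].
have a0 := zero_or_infty_ge0 aE; have f0 := zero_or_infty_ge0 fE.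
have [[h1 [h2 [S af0]]]|no_split] :=
  pselect (exists h1 h2, heap_split h h1 h2 /\ a (s, h1) + f (s, h2) = 0).
  by left; apply/eqP; rewrite eq_le sepadd_ge0 // -af0 sepadd_lb.
right; apply/eqP; rewrite eq_le leey /=.
apply: le_ereal_inf_tmp => _ [h1 [h2 [D [U ->]]]].
case: (aE (s, h1)) => a1; case: (fE (s, h2)) => f2; rewrite a1 f2 ?addye ?addey //.
by case: no_split; exists h1, h2; rewrite a1 f2 adde0.
Qed.

Lemma healthy_sepadd a : precise a -> nonneg a -> healthy (sepadd a).
Proof.
move=> a_prec a0.
have /choice[ch chE] : forall st, exists ch : \bar R * heap,
    0 <= ch.1 /\ forall f, nonneg f -> sepadd a f st = ch.1 + f (st.1, ch.2).
  by move=> st; have [c [h2 [c0 E]]] := sepadd_precise st a_prec a0; exists (c, h2).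
apply: (@healthy_pointwise _ (fun st0 f st => (ch st0).1 + f (st.1, (ch st0).2)) _ id).
- by move=> st0; apply: healthy_comp (healthy_shift (chE st0).1) (healthy_relocate _).
- by move=> f f0 st; rewrite (chE st).2.
Qed.

Lemma tsub_ge0 (x c : \bar R) : 0 <= tsub x c.
Proof. by rewrite /tsub; case: ifP => // _; rewrite le_max lexx orbT. Qed.

Lemma tsube0 (x : \bar R) : 0 <= x -> tsub x 0 = x.
Proof. by move=> x0; rewrite /tsub /= sube0; apply/max_idPl. Qed.

Lemma tsuby (x : \bar R) : tsub x +oo = 0.
Proof. by rewrite /tsub eqxx. Qed.

Lemma wand_ge0 b g : nonneg (wand b g).
Proof.
move=> st; apply: le_ereal_sup_tmp; exists (tsub (g (st.1, st.2)) (b (st.1, heap0))).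
  by exists heap0, st.2; case: (heap_split0 st.2).
exact: tsub_ge0.
Qed.

Lemma wand_lb b g st h' hu : heap_split hu st.2 h' -> b (st.1, h') = 0 ->
  0 <= g (st.1, hu) -> g (st.1, hu) <= wand b g st.
Proof.
move=> [D U] b0 g0; rewrite -(tsube0 g0) -b0.
by apply: ereal_sup_ubound; exists h', hu.
Qed.

Lemma ge_wand b g st y : zero_or_infty b -> 0 <= y ->
  (forall h' hu, heap_split hu st.2 h' -> b (st.1, h') = 0 -> g (st.1, hu) <= y) ->
  wand b g st <= y.
Proof.
move=> bE y0 gy; apply: ge_ereal_sup => _ [h' [hu [D [U ->]]]].
case: (bE (st.1, h')) => b1; rewrite b1 ?tsuby //.
rewrite /tsub; case: ifP => // _.
by rewrite sube0; apply: (gy h').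
Qed.

Lemma wand_mono b f g : zero_or_infty b -> nonneg g -> rle f g -> rle (wand b f) (wand b g).
Proof.
move=> bE g0 fg st; apply: ge_wand (wand_ge0 _ _ _) _ => // h' hu S b0.
exact: le_trans (fg _) (wand_lb S b0 (g0 _)).
Qed.

Lemma healthy_wand b : zero_or_infty b -> healthy (wand b).
Proof.
move=> bE; split.
- by move=> f _; apply: wand_ge0.
- by move=> f g _ g0; apply: wand_mono.
- move=> F cF st; apply/eqP; rewrite eq_le; apply/andP; split.
    apply: ge_wand (esup_ge0 _) _ => // [n|h' hu S b0]; first exact: wand_ge0.
    by apply: le_esup => n; apply: wand_lb S b0 (cF.1 n _).
  by apply: ge_esup => n; apply: wand_mono (supT_ge0 cF) (supT_ub F n) st.
- move=> f g f0 g0 st; apply: ge_wand (adde_ge0 (wand_ge0 _ _ _) (wand_ge0 _ _ _)) _ => //.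
  by move=> h' hu S b0; apply: leeD; apply: wand_lb S b0 _.
- move=> u f u0 f0 st; apply: ge_wand (adde_ge0 u0 (wand_ge0 _ _ _)) _ => //.
  by move=> h' hu S b0; apply: leeD2l; apply: wand_lb S b0 _.
Qed.

Section KnasterTarski.
Variable Phi : runtime -> runtime.

Lemma lfp_lb g : nonneg g -> rle (Phi g) g -> rle (lfp Phi) g.
Proof. by move=> g0 Phig st; apply: ereal_inf_lbound; exists g. Qed.

Lemma lfp_glb h : (forall g, nonneg g -> rle (Phi g) g -> rle h g) -> rle h (lfp Phi).
Proof. by move=> hg st; apply: le_ereal_inf_tmp => _ [g [g0 Phig] <-]; apply: hg. Qed.

Lemma lfp_ge0 : nonneg (lfp Phi).
Proof. by move=> st; apply: (@lfp_glb (fun _ => 0)) => g g0 _. Qed.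

Hypothesis hPhi : healthy Phi.

Lemma lfp_fix : rle (Phi (lfp Phi)) (lfp Phi).
Proof.
apply: lfp_glb => g g0 Phig st; apply: le_trans (Phig st).
by apply: (healthy_mono hPhi) => //; [exact: lfp_ge0 | exact: lfp_lb].
Qed.

Definition kleene k := iter k Phi (fun _ => 0).

Lemma kleeneS k : kleene k.+1 = Phi (kleene k).
Proof. by []. Qed.

Lemma kleene_chain : chain kleene.
Proof.
have kleene_ge0 k : nonneg (kleene k).
  by elim: k => [|k IH] st //=; apply: (healthy_ge0 hPhi).
split=> // k; elim: k => [|k IH] st /=; first exact: (healthy_ge0 hPhi).
by apply: (healthy_mono hPhi) => //; exact: (kleene_ge0 k.+1).
Qed.

Lemma kleene_le g : nonneg g -> rle (Phi g) g -> forall k, rle (kleene k) g.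
Proof.
move=> g0 Phig; elim=> [|k IH] st //=; apply: le_trans (Phig st).
by apply: (healthy_mono hPhi) => //; apply: kleene_chain.1.
Qed.

Lemma lfp_kleene : lfp Phi = supT kleene.
Proof.
apply: funext => st; apply/eqP; rewrite eq_le; apply/andP; split; last first.
  by apply: lfp_glb => g g0 Phig st'; apply: ge_esup => k; apply: kleene_le.
apply: lfp_lb st; first exact: supT_ge0 kleene_chain.
move=> st'; rewrite (healthy_cont hPhi kleene_chain).
by rewrite -[X in _ <= X](esup_succ (chain_nondecreasing st' kleene_chain)).
Qed.

End KnasterTarski.

Lemma iteE (b : bool) (x y : \bar R) :
  iverson R b * x + iverson R (~~ b) * y = if b then x else y.
Proof. by case: b; rewrite /iverson /= mul1e mul0e ?adde0 ?add0e. Qed.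

Lemma healthy_ite (phi : bexp Vars) T1 T2 : healthy T1 -> healthy T2 ->
  healthy (fun f st => iverson R (phi st.1) * T1 f st + iverson R (~~ phi st.1) * T2 f st).
Proof.
move=> h1 h2; apply: (@healthy_pointwise _ (fun b => if b then T1 else T2) _ (fun st => phi st.1)).
- by case.
- by move=> f _ st; rewrite iteE; case: (phi st.1).
Qed.

(* [ert (While phi C) f] is, by conversion, [lfp (loop (ert C) phi f)]. *)
Definition loop T (phi : bexp Vars) f : runtime -> runtime :=
  fun g st => iverson R (~~ phi st.1) * f st + iverson R (phi st.1) * T g st.

Lemma loopE T phi f g st : loop T phi f g st = if phi st.1 then T g st else f st.
Proof. by rewrite /loop addeC iteE. Qed.

Lemma healthy_loop T phi f : healthy T -> nonneg f -> healthy (loop T phi f).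
Proof.
move=> hT f0.
apply: (@healthy_pointwise _ (fun b => if b then T else fun _ => f) _ (fun st => phi st.1)).
- by case=> //; apply: healthy_const.
- by move=> g _ st; rewrite loopE; case: (phi st.1).
Qed.

Lemma kleene_loop_chain T phi F : healthy T -> chain F ->
  forall k, chain (fun n => kleene (loop T phi (F n)) k).
Proof.
move=> hT cF; elim=> [|k [K0 KS]]; first by split=> n st.
split=> n st; rewrite !kleeneS !loopE; case: (phi st.1).
- exact: (healthy_ge0 hT (K0 n)).
- exact: cF.1.
- exact: (healthy_mono hT (K0 n) (K0 n.+1) (KS n)).
- exact: cF.2.
Qed.

Lemma kleene_loop_supT T phi F : healthy T -> chain F ->
  forall k, kleene (loop T phi (supT F)) k = supT (fun n => kleene (loop T phi (F n)) k).
Proof.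
move=> hT cF; elim=> [|k IH]; apply: funext => st; first exact: (esym (esup_cst 0)).
rewrite kleeneS IH loopE.
have -> : supT (fun n => kleene (loop T phi (F n)) k.+1) st =
    esup (fun n => if phi st.1 then T (kleene (loop T phi (F n)) k) st else F n st).
  by apply: eq_esup => n; rewrite kleeneS loopE.
by case: (phi st.1); first exact: (healthy_cont hT (kleene_loop_chain phi hT cF k)).
Qed.

Lemma healthy_while T phi : healthy T -> healthy (fun f => lfp (loop T phi f)).
Proof.
move=> hT; split.
- by move=> f _; apply: lfp_ge0.
- move=> f g f0 g0 fg; apply: lfp_glb => X X0 LX; apply: lfp_lb => // st.
  by apply: le_trans (LX st); rewrite !loopE; case: (phi st.1).
- move=> F cF st; rewrite lfp_kleene; last exact: healthy_loop hT (supT_ge0 cF).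
  have -> : (fun n => lfp (loop T phi (F n)) st) = fun n => supT (kleene (loop T phi (F n))) st.
    by apply: funext => n; rewrite lfp_kleene //; apply: healthy_loop hT (cF.1 n).
  rewrite /supT; under eq_fun do rewrite (kleene_loop_supT phi hT cF).
  exact: (esup_swap (fun k n => kleene (loop T phi (F n)) k st)).
- move=> f g f0 g0; apply: lfp_lb; first by apply: radd_ge0; apply: lfp_ge0.
  move=> st; rewrite loopE /radd.
  apply: le_trans (leeD (lfp_fix (healthy_loop phi hT f0) st)
                        (lfp_fix (healthy_loop phi hT g0) st)).
  rewrite !loopE; case: (phi st.1) => //.
  exact: (healthy_subadd hT (lfp_ge0 _) (lfp_ge0 _)).
- move=> u f u0 f0; apply: lfp_lb; first by apply: radd_ge0 => //; apply: lfp_ge0.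
  move=> st; rewrite loopE /radd.
  apply: le_trans (leeD2l u (lfp_fix (healthy_loop phi hT f0) st)).
  rewrite !loopE; case: (phi st.1) => //.
  exact: (healthy_cst hT u0 (lfp_ge0 _)).
Qed.

Lemma healthy_pchoice (p : stack Vars -> R) T1 T2 : (forall s, (0 <= p s <= 1)%R) ->
  healthy T1 -> healthy T2 ->
  healthy (fun f st => (p st.1)%:E * T1 f st + (1 - p st.1)%:E * T2 f st).
Proof.
move=> p01 h1 h2.
have p0 s : (0 <= p s)%R by case/andP: (p01 s).
have q0 s : (0 <= 1 - p s)%R by case/andP: (p01 s) => _; rewrite subr_ge0.
split.
- move=> f f0 st; apply: adde_ge0; apply: mule_ge0; rewrite ?lee_fin //.
  + exact: (healthy_ge0 h1).
  + exact: (healthy_ge0 h2).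
- move=> f g f0 g0 fg st; apply: leeD; apply: lee_wpmul2l; rewrite ?lee_fin //.
  + exact: (healthy_mono h1).
  + exact: (healthy_mono h2).
- move=> F cF st; rewrite (healthy_cont h1 cF) (healthy_cont h2 cF) -!esupZl //.
  have [c1 c2] := (healthy_chain h1 cF, healthy_chain h2 cF).
  rewrite -esupD // => [m n mn|m n mn|n|n].
  + by apply: lee_wpmul2l; rewrite ?lee_fin //; apply: (chain_nondecreasing st c1).
  + by apply: lee_wpmul2l; rewrite ?lee_fin //; apply: (chain_nondecreasing st c2).
  + by apply: mule_ge0; rewrite ?lee_fin //; apply: c1.1.
  + by apply: mule_ge0; rewrite ?lee_fin //; apply: c2.1.
- move=> f g f0 g0 st; rewrite /radd.
  apply: le_trans (leeD (lee_wpmul2l _ (healthy_subadd h1 f0 g0 st))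
                        (lee_wpmul2l _ (healthy_subadd h2 f0 g0 st))) _; rewrite ?lee_fin //.
  rewrite /radd !ge0_muleDr //; try by [apply: (healthy_ge0 h1) | apply: (healthy_ge0 h2)].
  by rewrite addeACA.
- move=> u f u0 f0 st; rewrite /radd.
  apply: le_trans (leeD (lee_wpmul2l _ (healthy_cst h1 u0 f0 st))
                        (lee_wpmul2l _ (healthy_cst h2 u0 f0 st))) _; rewrite ?lee_fin //.
  rewrite /radd !ge0_muleDr //; try by [apply: (healthy_ge0 h1) | apply: (healthy_ge0 h2)].
  rewrite addeACA -ge0_muleDl ?lee_fin // -EFinD.
  have -> : (p st.1 + (1 - p st.1))%R = 1%R by rewrite addrC subrK.
  by rewrite mul1e.
Qed.

Lemma healthy_subst x (e : aexp Vars) : healthy (fun f => subst f x e).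
Proof. exact: (healthy_relocate (fun st => (upd st.1 x (e st.1), st.2))). Qed.

Lemma tm_ge0 (e : aexp Vars) : nonneg (tm R e).
Proof. by move=> st; rewrite /tm; case: asboolP => _ //; rewrite lee_fin. Qed.

Lemma tm_precise (e : aexp Vars) : precise (tm R e).
Proof.
apply: (@preciseP _ (fun _ _ _ => None)) => s h h1 h2 _.
by rewrite /tm /=; case: asboolP.
Qed.

Lemma pointsto_zero_or_infty (e e' : aexp Vars) : zero_or_infty (pointsto R e e').
Proof. by move=> st; rewrite /pointsto; case: asboolP => _; [left | right]. Qed.

Lemma pointsto_precise (e e' : aexp Vars) : precise (pointsto R e e').
Proof.
apply: (@preciseP _ (fun s _ l => if l == e s then Some (e' s) else None)) => s h h1 h2 _.
by rewrite /pointsto /=; case: asboolP.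
Qed.

Lemma pointsto_any_ge0 (e : aexp Vars) : nonneg (pointsto_any R e).
Proof. by move=> st; rewrite /pointsto_any; case: asboolP. Qed.

Lemma pointsto_any_precise (e : aexp Vars) : precise (pointsto_any R e).
Proof.
apply: (@preciseP _ (fun s h l => if l == e s then hfun h l else None)) => s h h1 h2 [D U].
rewrite /pointsto_any /=; case: asboolP => // -[h1_off h1_on] _ l.
case: eqP => [->|/h1_off //]; rewrite U.
by case: (hfun h1 (e s)) h1_on.
Qed.

Lemma bigsep_zero_or_infty (e : aexp Vars) (F : nat -> runtime) :
  (forall i, zero_or_infty (F i)) -> zero_or_infty (bigsep e F).
Proof.
move=> FE st; suff sepsumE n : zero_or_infty (sepsum n F) by apply: sepsumE.
elim: n => [|n IH] /=; last exact: sepadd_zero_or_infty.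
by move=> st'; rewrite /emp; case: asboolP => _; [left | right].
Qed.

Lemma inf_nat_one (X : nat -> runtime) st v0 :
  (forall v, v != v0 -> X v st = +oo) -> inf_nat X st = X v0 st.
Proof.
move=> Xoo; apply/eqP; rewrite eq_le; apply/andP; split.
  by apply: ereal_inf_lbound; exists v0.
apply: le_ereal_inf_tmp => _ [v _ <-].
by have [->|/Xoo ->] := eqVneq v v0; rewrite ?leey.
Qed.

Lemma healthy_lookup x (e : aexp Vars) : healthy (ert (Lookup x e)).
Proof.
pose S v f := sepadd (pointsto R e (fun _ => v))
   (wand (pointsto R e (fun _ => v)) (subst f x (fun _ => v))).
apply: (@healthy_pointwise _ S _ (fun st => odflt 0%N (hfun st.2 (e st.1)))).
  move=> v; rewrite /S; have ptE := pointsto_zero_or_infty e (fun _ => v).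
  exact: (healthy_comp (healthy_sepadd (@pointsto_precise e _) (zero_or_infty_ge0 ptE))
           (healthy_comp (healthy_wand ptE) (healthy_subst x (fun _ => v)))).
move=> f f0 st /=; apply: inf_nat_one => v v_ne.
apply: sepadd_infty => [|h1 h2 [D U]]; first exact: wand_ge0.
case: (pointsto_zero_or_infty e (fun _ => v) (st.1, h1)) => [|//].
rewrite /pointsto; case: asboolP => // h1_pt _.
move: v_ne (U (e st.1)); rewrite h1_pt eqxx => + st_e; rewrite st_e /=.
by rewrite eqxx.
Qed.

Lemma healthy_ert (C : prog Vars) : prog_wf C -> healthy (ert C).
Proof.
elim: C => [e|x e|x e|e e'|x e|e|C1 IH1 p C2 IH2|phi C1 IH1 C2 IH2|C1 IH1 C2 IH2|phi C1 IH1] /=.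
- by move=> _; apply: healthy_sepadd (@tm_precise e) (@tm_ge0 e).
- by move=> _; apply: healthy_subst.
- move=> _; apply: healthy_sup_nat => v.
  apply: healthy_comp (healthy_wand _) (healthy_subst x (fun _ => v)).
  by apply: bigsep_zero_or_infty => i; apply: pointsto_zero_or_infty.
- move=> _; apply: healthy_comp (healthy_wand (pointsto_zero_or_infty e e')).
  exact: healthy_sepadd (@pointsto_any_precise e) (@pointsto_any_ge0 e).
- by move=> _; apply: healthy_lookup.
- by move=> _; apply: healthy_sepadd (@pointsto_any_precise e) (@pointsto_any_ge0 e).
- move=> [p01 [wf1 wf2]]; apply: (@healthy_pchoice (fun s => ratr (p s)) _ _ _ (IH1 wf1) (IH2 wf2)) => s.
  have /andP[p0 p1] := p01 s.
  by rewrite ler0q p0 -(rmorph1 (ratr (R := R))) ler_rat.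
- by move=> [wf1 wf2]; apply: healthy_ite (IH1 wf1) (IH2 wf2).
- by move=> [wf1 wf2]; apply: healthy_comp (IH1 wf1) (IH2 wf2).
- by move=> wf; apply: healthy_while (IH1 wf).
Qed.

End Healthiness.

Theorem mainTheorem8 (R : realType) (Vars : finType) (C : prog Vars)
    (F : nat -> runtime R Vars) (f g : runtime R Vars) (u : \bar R) :
  prog_wf C ->
  (forall n, nonneg (F n)) -> (forall n, rle (F n) (F n.+1)) ->
  nonneg f -> nonneg g -> 0 <= u ->
  (forall st, ert C (supT F) st = ereal_sup (range (fun n => ert C (F n) st))) /\
  (rle f g -> rle (ert C f) (ert C g)) /\
  rle (ert C (radd f g)) (radd (ert C f) (ert C g)) /\
  rle (ert C (radd (fun _ => u) f)) (radd (fun _ => u) (ert C f)).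
Proof.
move=> wf F0 FS f0 g0 u0; have hC := healthy_ert R wf.
split; first by move=> st; rewrite (healthy_cont hC (conj F0 FS)).
split; first exact: (healthy_mono hC f0 g0).
by split; [apply: healthy_subadd | apply: healthy_cst].
Qed.
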